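(* Suppose Assumptions 1–4 hold and $p$ is convex. Let $\mathbf{x}$ be a Cournot candidate and $\mathbf{x}^S$ a social optimum. (a) If $p(X)=p(X^S)$, then $\gamma(\mathbf{x})=1$. (b) If $p(X)\neq p(X^S)$, let $c=|p'(X)|$, $d=\left|\dfrac{p(X^S)-p(X)}{X^S-X}\right|$ and $\overline c=c/d$. Then $\overline c\ge1$ and $$1>\gamma(\mathbf{x})\ge f(\overline c):=\frac{\phi^2+2}{\phi^2+2\phi+\overline c},\qquad \phi=\max\left\{\frac{2-\overline c+\sqrt{\overline c^{\,2}-4\overline c+12}}{2},\,1\right\}.$$
   Context: Cournot model: $N$ suppliers, inverse demand $p:[0,\infty)\to[0,\infty)$, supplier $n$ has cost $C_n:[0,\infty)\to[0,\infty)$ and chooses $x_n\ge0$; $X=\sum_n x_n$, $X^S=\sum_n x_n^S$. $\partial_\pm$ denote right/left derivatives; $C_n'(0)$ is the right derivative at $0$. Assumption 1: each $C_n$ is convex, continuous, nondecreasing on $[0,\infty)$, continuously differentiable on $(0,\infty)$, with $C_n(0)=0$. Assumption 2: $p$ is continuous, nonnegative, nonincreasing, $p(0)>0$; its right derivative at $0$ exists and at every $q>0$ its left and right derivatives exist. Assumption 3: there exists $R>0$ such that $p(R)\le\min_n C_n'(0)$. Assumption 4: $p(0)>\min_n C_n'(0)$. Social welfare of $\mathbf{x}\ge0$: $W(\mathbf{x})=\int_0^X p(q)\,dq-\sum_{n=1}^N C_n(x_n)$; a social optimum $\mathbf{x}^S$ maximizes $W$. Efficiency: $\gamma(\mathbf{x})=W(\mathbf{x})/W(\mathbf{x}^S)$.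 A nonnegative vector $\mathbf{x}$ is a Cournot candidate if for every $n$: $C_n'(x_n)\le p(X)+x_n\,\partial_-p(X)$ whenever $x_n>0$, and $C_n'(x_n)\ge p(X)+x_n\,\partial_+p(X)$. (For convex $p$, $p$ is differentiable at $X$ for any Cournot candidate with $X>0$.) *)

From Stdlib Require Import Reals Lra ClassicalEpsilon.
Open Scope R_scope.

(* Finite sum over indices 0..N-1 (suppliers are indexed 0..N-1). *)
Fixpoint rsum (N : nat) (f : nat -> R) : R :=
  match N with
  | O => 0
  | S k => rsum k f + f k
  end.

(* Riemann integral of f over [a,b] (RiemannInt is proof-irrelevant);
   chosen by epsilon; for continuous f this is the usual integral. *)
Definition Rint (f : R -> R) (a b : R) : R :=
  epsilon (inhabits 0) (fun I => exists pr : Riemann_integrable f a b, RiemannInt pr = I).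

Definition convex_nonneg (f : R -> R) : Prop :=
  forall x y t, 0 <= x -> 0 <= y -> 0 <= t <= 1 ->
    f (t * x + (1 - t) * y) <= t * f x + (1 - t) * f y.

Definition continuous_nonneg (f : R -> R) : Prop :=
  forall x, 0 <= x -> forall eps, 0 < eps -> exists delta, 0 < delta /\
    forall y, 0 <= y -> Rabs (y - x) < delta -> Rabs (f y - f x) < eps.

Definition nondecreasing_nonneg (f : R -> R) : Prop :=
  forall x y, 0 <= x -> x <= y -> f x <= f y.

Definition nonincreasing_nonneg (f : R -> R) : Prop :=
  forall x y, 0 <= x -> x <= y -> f y <= f x.

Definition is_right_deriv (f : R -> R) (x l : R) : Prop :=
  forall eps, 0 < eps -> exists delta, 0 < delta /\
    forall h, 0 < h < delta -> Rabs ((f (x + h) - f x) / h - l) < eps.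

Definition is_left_deriv (f : R -> R) (x l : R) : Prop :=
  forall eps, 0 < eps -> exists delta, 0 < delta /\
    forall h, 0 < h < delta -> Rabs ((f (x - h) - f x) / (- h) - l) < eps.

(* Assumption 1 for a cost C with derivative function dC
   (dC x = C'(x) for x > 0, dC 0 = right derivative at 0). *)
Definition assumption1_cost (C dC : R -> R) : Prop :=
  convex_nonneg C /\ continuous_nonneg C /\ nondecreasing_nonneg C /\
  (forall x, 0 < x -> derivable_pt_lim C x (dC x)) /\
  (forall x, 0 < x -> continuity_pt dC x) /\
  is_right_deriv C 0 (dC 0) /\
  C 0 = 0.

(* Assumption 2, with dpp = right derivative, dpm = left derivative of p *)
Definition assumption2 (p dpp dpm : R -> R) : Prop :=
  continuous_nonneg p /\ (forall q, 0 <= q -> 0 <= p q) /\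
  nonincreasing_nonneg p /\ 0 < p 0 /\
  is_right_deriv p 0 (dpp 0) /\
  (forall q, 0 < q -> is_left_deriv p q (dpm q) /\ is_right_deriv p q (dpp q)).

Definition nonneg_vec (N : nat) (x : nat -> R) : Prop :=
  forall n, (n < N)%nat -> 0 <= x n.

Definition total (N : nat) (x : nat -> R) : R := rsum N x.

Definition welfare (N : nat) (p : R -> R) (C : nat -> R -> R) (x : nat -> R) : R :=
  Rint p 0 (total N x) - rsum N (fun n => C n (x n)).

Definition social_optimum (N : nat) (p : R -> R) (C : nat -> R -> R) (xS : nat -> R) : Prop :=
  nonneg_vec N xS /\
  forall y, nonneg_vec N y -> welfare N p C y <= welfare N p C xS.

Definition efficiency (N : nat) (p : R -> R) (C : nat -> R -> R) (x xS : nat -> R) : R :=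
  welfare N p C x / welfare N p C xS.

Definition cournot_candidate (N : nat) (p dpp dpm : R -> R) (dC : nat -> R -> R)
  (x : nat -> R) : Prop :=
  nonneg_vec N x /\
  forall n, (n < N)%nat ->
    (0 < x n -> dC n (x n) <= p (total N x) + x n * dpm (total N x)) /\
    dC n (x n) >= p (total N x) + x n * dpp (total N x).

Definition phi_of (cb : R) : R :=
  Rmax ((2 - cb + sqrt (cb ^ 2 - 4 * cb + 12)) / 2) 1.

Definition f_bound (cb : R) : R :=
  let ph := phi_of cb in (ph ^ 2 + 2) / (ph ^ 2 + 2 * ph + cb).

(* Write [X], [XS] for the total outputs of the Cournot candidate [x] and of the
   social optimum [xS], [P = p X], [Q = p XS] and [c = |p'(X)|].  The proof compares
   both outcomes through supporting lines of the convex costs and of the convex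
   inverse demand:
   - the Cournot conditions make [p] differentiable at [X] and give marginal costs
     [C_n'(x_n) = P - c x_n] for active suppliers; the optimum cannot gain from
     unilateral deviations, so under-producers have [C_n'(x_n) <= Q] and
     over-producers [C_n'(x_n) >= Q];
   - tangent lines bound the costs, hence [W(xS) - W(x)] above and [W(x)] below by
     integrals of [p] and the moments [sum x_n (xS_n - x_n)] and [sum x_n^2];
   - if [P = Q] these bounds force [W(x) = W(xS)] (part (a));
   - otherwise [X < XS], the secant slope [d] lies in [(0, c]], the price integrals
     are bounded by tangent and chord, and splitting off the largest
     under-producer reduces the claim to an inequality in two real variables whose
     optimum is [f_bound (c / d)] (part (b)).
   The file develops one-sided limits and convexity, finite sums, integrals, the
   algebra of [f_bound], and unilateral deviations, then the section
   [CournotCandidate] proves the theorem under the unpacked assumptions. *)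

From Pilot Require Import Defs.
From Stdlib Require Import Reals Lra Psatz Lia ClassicalEpsilon.
From Coquelicot Require Import Coquelicot.
Open Scope R_scope.

(* [q h] tends to [l] as [h] decreases to 0.  Both one-sided derivatives of [Defs]
   are right limits of difference quotients, so one set of limit lemmas serves all. *)
Definition right_limit (q : R -> R) (l : R) : Prop :=
  forall eps, 0 < eps -> exists delta, 0 < delta /\
    forall h, 0 < h < delta -> Rabs (q h - l) < eps.

Lemma small_pos (a b : R) : 0 < a -> 0 < b -> exists h, 0 < h < a /\ h < b.
Proof.
  intros Ha Hb. exists (Rmin a b / 2).
  pose proof (Rmin_l a b). pose proof (Rmin_r a b).
  pose proof (Rmin_glb_lt a b 0 Ha Hb). lra.
Qed.

Lemma right_limit_le (q : R -> R) (l s d0 : R) : right_limit q l -> 0 < d0 ->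
  (forall h, 0 < h < d0 -> q h <= s) -> l <= s.
Proof.
  intros Hq Hd0 Hs. destruct (Rle_or_lt l s) as [|Hlt]; [assumption|].
  destruct (Hq (l - s)) as [delta [Hdelta Hclose]]; [lra|].
  destruct (small_pos delta d0 Hdelta Hd0) as [h [Hh Hhd0]].
  specialize (Hclose h Hh). specialize (Hs h ltac:(lra)).
  apply Rabs_def2 in Hclose. lra.
Qed.

Lemma right_limit_ge (q : R -> R) (l s d0 : R) : right_limit q l -> 0 < d0 ->
  (forall h, 0 < h < d0 -> s <= q h) -> s <= l.
Proof.
  intros Hq Hd0 Hs. destruct (Rle_or_lt s l) as [|Hlt]; [assumption|].
  destruct (Hq (s - l)) as [delta [Hdelta Hclose]]; [lra|].
  destruct (small_pos delta d0 Hdelta Hd0) as [h [Hh Hhd0]].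
  specialize (Hclose h Hh). specialize (Hs h ltac:(lra)).
  apply Rabs_def2 in Hclose. lra.
Qed.

Lemma right_limit_ext (q q' : R -> R) (l : R) :
  (forall h, 0 < h -> q h = q' h) -> right_limit q l -> right_limit q' l.
Proof.
  intros Hext Hq eps Heps. destruct (Hq eps Heps) as [delta [Hdelta Hclose]].
  exists delta. split; [assumption|]. intros h Hh. rewrite <- Hext by lra. auto.
Qed.

Lemma continuous_right_limit (f : R -> R) (x : R) : continuous_nonneg f -> 0 <= x ->
  right_limit (fun e => f (x + e)) (f x).
Proof.
  intros Hf Hx eps Heps. destruct (Hf x Hx eps Heps) as [delta [Hdelta Hclose]].
  exists delta. split; [assumption|]. intros h Hh.
  apply Hclose; [lra|]. rewrite Rabs_right; lra.
Qed.

Lemma continuous_left_limit (f : R -> R) (x : R) : continuous_nonneg f -> 0 < x ->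
  right_limit (fun e => f (x - e)) (f x).
Proof.
  intros Hf Hx eps Heps. destruct (Hf x ltac:(lra) eps Heps) as [delta [Hdelta Hclose]].
  exists (Rmin delta x). split; [apply Rmin_glb_lt; lra|]. intros h Hh.
  pose proof (Rmin_l delta x). pose proof (Rmin_r delta x).
  apply Hclose; [lra|]. rewrite Rabs_left; lra.
Qed.

Definition slope (f : R -> R) (a b : R) : R := (f b - f a) / (b - a).

Lemma slope_mul (f : R -> R) (a b : R) : a <> b -> slope f a b * (b - a) = f b - f a.
Proof. intros Hab. unfold slope. field. lra. Qed.

Lemma slope_nonneg (f : R -> R) (a b : R) : a < b -> f a <= f b -> 0 <= slope f a b.
Proof. intros Hab Hf. unfold slope. apply Rdiv_le_0_compat; lra. Qed.

Lemma slope_nonpos (f : R -> R) (a b : R) : a < b -> f b <= f a -> slope f a b <= 0.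
Proof.
  intros Hab Hf. unfold slope. replace ((f b - f a) / (b - a)) with (- ((f a - f b) / (b - a))) by (field; lra).
  pose proof (Rdiv_le_0_compat (f a - f b) (b - a) ltac:(lra) ltac:(lra)). lra.
Qed.

Lemma right_deriv_slope (f : R -> R) (x l : R) : is_right_deriv f x l ->
  right_limit (fun h => slope f x (x + h)) l.
Proof.
  apply right_limit_ext. intros h Hh. unfold slope. f_equal. ring.
Qed.

Lemma left_deriv_slope (f : R -> R) (x l : R) : is_left_deriv f x l ->
  right_limit (fun h => slope f (x - h) x) l.
Proof.
  apply right_limit_ext. intros h Hh. unfold slope. field. lra.
Qed.

Lemma derivable_right (f : R -> R) (x l : R) : derivable_pt_lim f x l -> is_right_deriv f x l.
Proof.
  intros H eps He. destruct (H eps He) as [delta Hdelta]. exists delta.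
  split; [apply cond_pos|]. intros h Hh. apply Hdelta; [lra|]. rewrite Rabs_right; lra.
Qed.

Lemma derivable_left (f : R -> R) (x l : R) : derivable_pt_lim f x l -> is_left_deriv f x l.
Proof.
  intros H eps He. destruct (H eps He) as [delta Hdelta]. exists delta.
  split; [apply cond_pos|]. intros h Hh. replace (x - h) with (x + - h) by ring.
  apply Hdelta; [lra|]. rewrite Rabs_left; lra.
Qed.

Section Convexity.
Variable f : R -> R.
Hypothesis Hf : convex_nonneg f.

(* The three-slope inequality, from convexity at the point [b] of [[a, c]]. *)
Lemma convex_three_slopes (a b c : R) : 0 <= a -> a < b -> b < c ->
  slope f a b <= slope f a c /\ slope f a c <= slope f b c.
Proof.
  intros Ha Hab Hbc. set (t := (c - b) / (c - a)).
  assert (Ht : 0 <= t <= 1).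
  { unfold t; split; [apply Rdiv_le_0_compat; lra|].
    apply (Rmult_le_reg_r (c - a)); [lra|]. unfold Rdiv. rewrite Rmult_assoc, Rinv_l; lra. }
  pose proof (Hf a c t Ha ltac:(lra) Ht) as Hconv.
  replace (t * a + (1 - t) * c) with b in Hconv by (unfold t; field; lra).
  assert (Hchord : f b * (c - a) <= (c - b) * f a + (b - a) * f c).
  { apply (Rmult_le_compat_r (c - a)) in Hconv; [|lra].
    replace ((t * f a + (1 - t) * f c) * (c - a)) with ((c - b) * f a + (b - a) * f c)
      in Hconv by (unfold t; field; lra). lra. }
  unfold slope. split.
  - apply (Rmult_le_reg_r ((b - a) * (c - a))); [nra|].
    replace ((f b - f a) / (b - a) * ((b - a) * (c - a))) with ((f b - f a) * (c - a)) by (field; lra).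
    replace ((f c - f a) / (c - a) * ((b - a) * (c - a))) with ((f c - f a) * (b - a)) by (field; lra).
    nra.
  - apply (Rmult_le_reg_r ((c - a) * (c - b))); [nra|].
    replace ((f c - f a) / (c - a) * ((c - a) * (c - b))) with ((f c - f a) * (c - b)) by (field; lra).
    replace ((f c - f b) / (c - b) * ((c - a) * (c - b))) with ((f c - f b) * (c - a)) by (field; lra).
    nra.
Qed.

Lemma convex_slope_mono (a b u v : R) : 0 <= a -> a < b -> a <= u -> u < v -> b <= v ->
  slope f a b <= slope f u v.
Proof.
  intros Ha Hab Hau Huv Hbv.
  assert (Hav : slope f a b <= slope f a v).
  { destruct (Rle_lt_or_eq_dec b v Hbv) as [Hlt|<-]; [|lra].
    apply (convex_three_slopes a b v); lra. }
  destruct (Rle_lt_or_eq_dec a u Hau) as [Hlt|<-]; [|assumption].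
  eapply Rle_trans; [exact Hav|]. apply (convex_three_slopes a u v); lra.
Qed.

Lemma right_deriv_le_slope (a g u v : R) : is_right_deriv f a g ->
  0 <= a -> a <= u -> u < v -> g <= slope f u v.
Proof.
  intros Hd Ha Hau Huv.
  apply (right_limit_le _ g _ (v - a) (right_deriv_slope f a g Hd)); [lra|].
  intros h Hh. apply convex_slope_mono; lra.
Qed.

Lemma slope_le_left_deriv (a g u v : R) : is_left_deriv f a g ->
  0 <= u -> u < v -> v <= a -> slope f u v <= g.
Proof.
  intros Hd Hu Huv Hva.
  apply (right_limit_ge _ g _ (a - u) (left_deriv_slope f a g Hd)); [lra|].
  intros h Hh. apply convex_slope_mono; lra.
Qed.

Lemma left_deriv_le_right_deriv (a gl gr : R) : 0 < a ->
  is_left_deriv f a gl -> is_right_deriv f a gr -> gl <= gr.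
Proof.
  intros Ha Hl Hr. apply (right_limit_ge _ gr _ 1 (right_deriv_slope f a gr Hr)); [lra|].
  intros h Hh. apply (right_limit_le _ gl _ a (left_deriv_slope f a gl Hl) Ha).
  intros h' Hh'. apply convex_slope_mono; lra.
Qed.

Lemma tangent_below_right (a g y : R) : is_right_deriv f a g -> 0 <= a -> a <= y ->
  f a + g * (y - a) <= f y.
Proof.
  intros Hd Ha Hay. destruct (Rle_lt_or_eq_dec a y Hay) as [Hlt|<-]; [|lra].
  pose proof (right_deriv_le_slope a g a y Hd Ha ltac:(lra) Hlt) as Hs.
  apply (Rmult_le_compat_r (y - a)) in Hs; [|lra].
  rewrite slope_mul in Hs by lra. lra.
Qed.

Lemma tangent_below_left (a g y : R) : is_left_deriv f a g -> 0 <= y -> y <= a ->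
  f a + g * (y - a) <= f y.
Proof.
  intros Hd Hy Hya. destruct (Rle_lt_or_eq_dec y a Hya) as [Hlt| ->]; [|lra].
  pose proof (slope_le_left_deriv a g y a Hd Hy Hlt ltac:(lra)) as Hs.
  apply (Rmult_le_compat_r (a - y)) in Hs; [|lra].
  rewrite slope_mul in Hs by lra. lra.
Qed.

Lemma convex_below_chord (a b t : R) : 0 <= a -> a <= t -> t <= b -> a < b ->
  f t <= f a + slope f a b * (t - a).
Proof.
  intros Ha Hat Htb Hab.
  destruct (Rle_lt_or_eq_dec a t Hat) as [Hlt|<-]; [|lra].
  destruct (Rle_lt_or_eq_dec t b Htb) as [Hlt'| ->]; [|rewrite slope_mul by lra; lra].
  destruct (convex_three_slopes a t b Ha Hlt Hlt') as [Hs _].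
  apply (Rmult_le_compat_r (t - a)) in Hs; [|lra].
  rewrite slope_mul in Hs by lra. lra.
Qed.

End Convexity.

Lemma rsum_ext (N : nat) (f g : nat -> R) :
  (forall n, (n < N)%nat -> f n = g n) -> rsum N f = rsum N g.
Proof.
  induction N as [|N IH]; simpl; intros H; [reflexivity|].
  rewrite IH by (intros; apply H; lia). rewrite H by lia. reflexivity.
Qed.

Lemma rsum_le (N : nat) (f g : nat -> R) :
  (forall n, (n < N)%nat -> f n <= g n) -> rsum N f <= rsum N g.
Proof.
  induction N as [|N IH]; simpl; intros H; [lra|].
  pose proof (IH ltac:(intros; apply H; lia)). pose proof (H N ltac:(lia)). lra.
Qed.

Lemma rsum_zero (N : nat) : rsum N (fun _ => 0) = 0.
Proof. induction N; simpl; lra. Qed.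

Lemma rsum_nonneg (N : nat) (f : nat -> R) :
  (forall n, (n < N)%nat -> 0 <= f n) -> 0 <= rsum N f.
Proof. intros H. rewrite <- (rsum_zero N). apply rsum_le. exact H. Qed.

Lemma rsum_plus (N : nat) (f g : nat -> R) : rsum N (fun n => f n + g n) = rsum N f + rsum N g.
Proof. induction N as [|N IH]; simpl; [lra|]. rewrite IH. ring. Qed.

Lemma rsum_minus (N : nat) (f g : nat -> R) : rsum N (fun n => f n - g n) = rsum N f - rsum N g.
Proof. induction N as [|N IH]; simpl; [lra|]. rewrite IH. ring. Qed.

Lemma rsum_scal (N : nat) (a : R) (f : nat -> R) : rsum N (fun n => a * f n) = a * rsum N f.
Proof. induction N as [|N IH]; simpl; [lra|]. rewrite IH. ring. Qed.

Lemma rsum_upd (N m : nat) (f f' : nat -> R) : (m < N)%nat ->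
  (forall n, (n < N)%nat -> n <> m -> f' n = f n) ->
  rsum N f' = rsum N f + (f' m - f m).
Proof.
  induction N as [|N IH]; simpl; intros Hm H; [lia|].
  destruct (Nat.eq_dec N m) as [<-|].
  - rewrite (rsum_ext N f' f) by (intros; apply H; lia). ring.
  - rewrite IH by (lia || (intros; apply H; lia)). rewrite (H N) by lia. ring.
Qed.

Lemma rsum_term_plus_le (N m : nat) (f g : nat -> R) : (m < N)%nat ->
  (forall n, (n < N)%nat -> n <> m -> 0 <= g n <= f n) ->
  f m + rsum N g - g m <= rsum N f.
Proof.
  intros Hm H.
  set (g' := fun n => if Nat.eq_dec n m then f m else g n).
  assert (Hg' : rsum N g' = rsum N g + (g' m - g m)).
  { apply rsum_upd; [exact Hm|]. intros n _ Hn. unfold g'. destruct (Nat.eq_dec n m); [lia|reflexivity]. }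
  assert (Hgm : g' m = f m) by (unfold g'; destruct (Nat.eq_dec m m); [reflexivity|lia]).
  assert (rsum N g' <= rsum N f).
  { apply rsum_le. intros n Hn. unfold g'. destruct (Nat.eq_dec n m) as [->|]; [lra|].
    apply H; assumption. }
  lra.
Qed.

Lemma rsum_pos_ex (N : nat) (f : nat -> R) : 0 < rsum N f -> exists n, (n < N)%nat /\ 0 < f n.
Proof.
  induction N as [|N IH]; simpl; intros H; [lra|].
  destruct (Rlt_or_le 0 (f N)); [exists N; split; [lia|assumption]|].
  destruct IH as [n [Hn Hf]]; [lra|]. exists n. split; [lia|assumption].
Qed.

Lemma argmax_ex (N : nat) (x y : nat -> R) :
  (exists m, (m < N)%nat /\ 0 < y m /\ forall n, (n < N)%nat -> 0 < y n -> x n <= x m) \/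
  (forall n, (n < N)%nat -> y n <= 0).
Proof.
  induction N as [|N [[m [Hm [Hy Hmax]]]|Hall]].
  - right. intros; lia.
  - destruct (Rlt_or_le 0 (y N)) as [HyN|HyN];
      [destruct (Rle_or_lt (x N) (x m)) as [Hle|Hlt]|].
    + left. exists m. repeat split; [lia|assumption|]. intros n Hn Hyn.
      destruct (Nat.eq_dec n N) as [->|]; [assumption| apply Hmax; [lia|assumption]].
    + left. exists N. repeat split; [lia|assumption|]. intros n Hn Hyn.
      destruct (Nat.eq_dec n N) as [->|]; [lra|]. pose proof (Hmax n ltac:(lia) Hyn). lra.
    + left. exists m. repeat split; [lia|assumption|]. intros n Hn Hyn.
      destruct (Nat.eq_dec n N) as [->|]; [lra| apply Hmax; [lia|assumption]].
  - destruct (Rlt_or_le 0 (y N)) as [HyN|HyN].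
    + left. exists N. repeat split; [lia|assumption|]. intros n Hn Hyn.
      destruct (Nat.eq_dec n N) as [->|]; [lra|]. pose proof (Hall n ltac:(lia)). lra.
    + right. intros n Hn. destruct (Nat.eq_dec n N) as [->|]; [assumption| apply Hall; lia].
Qed.

(* Integrals.  [Rint] agrees with Coquelicot's [RInt] for functions continuous on
   [0, +oo), which lets us use Coquelicot's integration theory.  Extending [f]
   constantly to the left of 0 makes it continuous everywhere. *)
Lemma continuous_extended (f : R -> R) : continuous_nonneg f ->
  forall z, continuous (fun t => f (Rmax 0 t)) z.
Proof.
  intros Hf z. apply continuity_pt_filterlim.
  intros eps Heps. destruct (Hf (Rmax 0 z) (Rmax_l 0 z) eps Heps) as [delta [Hdelta H]].
  exists delta. split; [assumption|]. intros y [_ Hy]. simpl in *. unfold R_dist in *.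
  apply H; [apply Rmax_l|].
  assert (Rabs (Rmax 0 y - Rmax 0 z) <= Rabs (y - z)).
  { unfold Rmax; destruct (Rle_dec 0 y), (Rle_dec 0 z); unfold Rabs;
      repeat destruct Rcase_abs; lra. }
  lra.
Qed.

Lemma ex_RInt_nonneg (f : R -> R) (a b : R) : continuous_nonneg f -> 0 <= a -> 0 <= b ->
  ex_RInt f a b.
Proof.
  intros Hf Ha Hb. apply (ex_RInt_ext (fun t => f (Rmax 0 t))).
  - intros t Ht. rewrite Rmax_right; [reflexivity|].
    pose proof (Rmin_glb a b 0 ltac:(lra) ltac:(lra)). lra.
  - apply (ex_RInt_continuous (V := R_CompleteNormedModule)). intros. apply continuous_extended. assumption.
Qed.

Lemma Rint_RInt (f : R -> R) (a b : R) : continuous_nonneg f -> 0 <= a -> 0 <= b ->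
  Rint f a b = RInt f a b.
Proof.
  intros Hf Ha Hb. pose proof (ex_RInt_Reals_0 _ _ _ (ex_RInt_nonneg f a b Hf Ha Hb)) as pr.
  unfold Rint.
  destruct (epsilon_spec (inhabits 0)
    (fun I => exists pr : Riemann_integrable f a b, RiemannInt pr = I)) as [pr' Hpr'].
  { exists (RiemannInt pr). exists pr. reflexivity. }
  rewrite <- Hpr'. symmetry. apply RInt_Reals.
Qed.

Lemma Rint_diff (f : R -> R) (a b : R) : continuous_nonneg f -> 0 <= a -> 0 <= b ->
  Rint f 0 b - Rint f 0 a = RInt f a b.
Proof.
  intros Hf Ha Hb. rewrite !Rint_RInt by (assumption || lra).
  rewrite <- (RInt_Chasles f 0 a b) by (apply ex_RInt_nonneg; (assumption || lra)).
  unfold plus; simpl. ring.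
Qed.

Lemma RInt_nonincreasing (f : R -> R) (a b : R) : continuous_nonneg f -> nonincreasing_nonneg f ->
  0 <= a -> 0 <= b -> (b - a) * f b <= RInt f a b <= (b - a) * f a.
Proof.
  intros Hf Hm Ha Hb.
  assert (Hord : forall u v, 0 <= u -> u <= v -> (v - u) * f v <= RInt f u v <= (v - u) * f u).
  { intros u v Hu Huv.
    assert (Hconst : forall k : R, RInt (fun _ => k) u v = (v - u) * k) by (intros; rewrite RInt_const; reflexivity).
    assert (Hex : ex_RInt f u v) by (apply ex_RInt_nonneg; (assumption || lra)).
    rewrite <- !Hconst. split; apply RInt_le; try assumption; try apply ex_RInt_const;
      intros t Ht; apply Hm; lra. }
  destruct (Rle_or_lt a b) as [Hab|Hba]; [apply Hord; assumption|].
  rewrite <- (opp_RInt_swap f b a) by (apply ex_RInt_nonneg; assumption).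
  destruct (Hord b a Hb ltac:(lra)). unfold opp; simpl. lra.
Qed.

Lemma RInt_affine (A B a b : R) :
  RInt (fun t => A + B * t) a b = A * (b - a) + B * (b * b - a * a) / 2.
Proof.
  apply is_RInt_unique.
  replace (A * (b - a) + B * (b * b - a * a) / 2) with
    (minus ((fun t => A * t + B * (t * t) / 2) b) ((fun t => A * t + B * (t * t) / 2) a))
    by (unfold minus, plus, opp; simpl; unfold AbelianMonoid.plus, AbelianGroup.opp; simpl;
        rewrite !Rdiv_def; ring).
  apply (is_RInt_derive (V := R_CompleteNormedModule) (fun t => A * t + B * (t * t) / 2)).
  - intros t _. auto_derive; [exact I|]. field.
  - intros t _. apply continuity_pt_filterlim. apply continuity_pt_plus.
    + apply continuity_pt_const. intros u v. reflexivity.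
    + apply continuity_pt_scal. apply continuity_pt_id.
Qed.

Lemma ex_RInt_affine (A B a b : R) : ex_RInt (fun t => A + B * t) a b.
Proof.
  apply (ex_RInt_continuous (V := R_CompleteNormedModule)). intros t _.
  apply continuity_pt_filterlim. apply continuity_pt_plus.
  - apply continuity_pt_const. intros u v. reflexivity.
  - apply continuity_pt_scal. apply continuity_pt_id.
Qed.

Lemma RInt_convex_chord (f : R -> R) (a b : R) : convex_nonneg f -> continuous_nonneg f ->
  0 <= a -> a < b -> RInt f a b <= (f a + f b) / 2 * (b - a).
Proof.
  intros Hconv Hf Ha Hab. set (s := slope f a b).
  replace ((f a + f b) / 2 * (b - a))
    with ((f a - s * a) * (b - a) + s * (b * b - a * a) / 2)
    by (assert (s * (b - a) = f b - f a) by (apply slope_mul; lra); nra).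
  rewrite <- RInt_affine. apply RInt_le; [lra| apply ex_RInt_nonneg; (assumption || lra)| apply ex_RInt_affine|].
  intros t Ht. pose proof (convex_below_chord f Hconv a b t Ha ltac:(lra) ltac:(lra) Hab). unfold s. lra.
Qed.

Lemma RInt_convex_tangent (f : R -> R) (a b g : R) : convex_nonneg f -> continuous_nonneg f ->
  is_left_deriv f b g -> 0 <= a -> a <= b ->
  (b - a) * f b - g * (b - a) ^ 2 / 2 <= RInt f a b.
Proof.
  intros Hconv Hf Hd Ha Hab.
  replace ((b - a) * f b - g * (b - a) ^ 2 / 2)
    with ((f b - g * b) * (b - a) + g * (b * b - a * a) / 2) by field.
  rewrite <- RInt_affine. apply RInt_le; [assumption| apply ex_RInt_affine| apply ex_RInt_nonneg; (assumption || lra)|].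
  intros t Ht. pose proof (tangent_below_left f Hconv b g t Hd ltac:(lra) ltac:(lra)). lra.
Qed.

(* The function [f_bound].  For [k >= 1], [phi_of k] minimizes
   [t |-> (t^2 + 2) / (t^2 + 2 t + k)] over [t >= 1]; [f_bound k] is the minimum. *)
Lemma phi_of_ge1 (k : R) : 1 <= phi_of k.
Proof. apply Rmax_r. Qed.

Lemma f_bound_min (k t : R) : 1 <= k -> 1 <= t -> f_bound k * (t ^ 2 + 2 * t + k) <= t ^ 2 + 2.
Proof.
  intros Hk Ht. pose proof (phi_of_ge1 k) as Hph. unfold f_bound, phi_of in *.
  set (s := sqrt (k ^ 2 - 4 * k + 12)) in *.
  assert (Hs0 : 0 <= s) by apply sqrt_pos.
  assert (Hs2 : s * s = k ^ 2 - 4 * k + 12) by (apply sqrt_sqrt; nra).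
  set (r := (2 - k + s) / 2) in *.
  set (ph := Rmax r 1) in *.
  assert (Hden : 0 < ph ^ 2 + 2 * ph + k) by nra.
  cbv zeta. apply (Rmult_le_reg_r (ph ^ 2 + 2 * ph + k)); [exact Hden|].
  replace ((ph ^ 2 + 2) / (ph ^ 2 + 2 * ph + k) * (t ^ 2 + 2 * t + k) * (ph ^ 2 + 2 * ph + k))
    with ((ph ^ 2 + 2) * (t ^ 2 + 2 * t + k)) by (field; lra).
  destruct (Rle_dec r 1) as [Hr1|Hr1].
  - (* the unconstrained minimizer lies left of 1, so [ph = 1] *)
    unfold ph. rewrite Rmax_right by lra.
    assert (s <= k) by (unfold r in Hr1; lra).
    assert (k >= 3) by nra.
    assert (0 <= (t - 1) * (k * t + k - 6)) by (apply Rmult_le_pos; nra). nra.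
  - (* [ph = r], the positive root of [r^2 + (k-2) r - 2 = 0] *)
    unfold ph. rewrite Rmax_left by lra.
    assert (Hr : r ^ 2 + (k - 2) * r - 2 = 0) by (unfold r; nra).
    assert (Hk_root : k = (2 - r ^ 2) / r + 2).
    { apply (Rmult_eq_reg_r r); [|lra]. field_simplify; [nra|lra]. }
    assert (E : (t ^ 2 + 2) * (r ^ 2 + 2 * r + k) - (r ^ 2 + 2) * (t ^ 2 + 2 * t + k)
               = (r ^ 2 + 2) * (t - r) ^ 2 / r) by (rewrite Hk_root; field; lra).
    assert (0 <= (r ^ 2 + 2) * (t - r) ^ 2 / r).
    { apply Rdiv_le_0_compat; [|lra]. apply Rmult_le_pos; [nra|apply pow2_ge_0]. }
    lra.
Qed.

Lemma f_bound_range (k : R) : 1 <= k -> 0 <= f_bound k <= 1.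
Proof.
  intros Hk. pose proof (f_bound_min k 1 Hk ltac:(lra)) as Hmin.
  pose proof (phi_of_ge1 k) as Hph. unfold f_bound in *. cbv zeta in *.
  split; [apply Rdiv_le_0_compat; nra|]. nra.
Qed.

(* The inequality behind the efficiency bound, in normalized variables: [u] is the
   scaled output of the largest under-producer and [v] the scaled total output of
   the over-producers. *)
Lemma f_bound_key (k u v : R) : 1 <= k -> 1 <= u -> 0 <= v ->
  f_bound k * (u * (k + v) - k / 2) <= (1 - f_bound k) * ((u + v) ^ 2 / 2 + u ^ 2).
Proof.
  intros Hk Hu Hv. set (f := f_bound k). set (t := (u + v) / u).
  assert (Htu : t * u = u + v) by (unfold t; field; lra).
  assert (Ht : 1 <= t) by (apply (Rmult_le_reg_r u); nra).
  pose proof (f_bound_min k t Hk Ht) as Hmin. fold f in Hmin.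
  destruct (f_bound_range k Hk) as [Hf0 _]. fold f in Hf0.
  assert (Hscaled : f * ((u + v) ^ 2 + 2 * u * (u + v) + k * u ^ 2) <= (u + v) ^ 2 + 2 * u ^ 2).
  { replace ((u + v) ^ 2 + 2 * u * (u + v) + k * u ^ 2) with (u ^ 2 * (t ^ 2 + 2 * t + k))
      by (rewrite <- Htu; ring).
    replace ((u + v) ^ 2 + 2 * u ^ 2) with (u ^ 2 * (t ^ 2 + 2)) by (rewrite <- Htu; ring).
    nra. }
  assert (0 <= f * (k * (u - 1) ^ 2)) by (apply Rmult_le_pos; [lra| apply Rmult_le_pos; nra]).
  nra.
Qed.

(* Split of the output vector used in the efficiency bound: the largest
   under-producer [m] (with [x m < y m]) and the total output [b] of the
   over-producers control the cross term [sum x_n (y_n - x_n)]. *)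
Lemma largest_underproducer (N : nat) (x y : nat -> R) :
  nonneg_vec N x -> nonneg_vec N y -> 0 < rsum N (fun n => y n - x n) ->
  exists m b, (m < N)%nat /\ x m < y m /\ 0 <= b /\ x m + b <= rsum N x /\
    rsum N (fun n => x n * (y n - x n)) <= x m * (rsum N (fun n => y n - x n) + b).
Proof.
  intros Hx Hy Hpos.
  destruct (argmax_ex N x (fun n => y n - x n)) as [[m [Hm [Hym Hmax]]]|Hnone].
  2:{ exfalso. pose proof (rsum_le N _ (fun _ => 0) Hnone). rewrite rsum_zero in *. lra. }
  set (over := fun n => if Rle_dec (y n - x n) 0 then x n else 0).
  exists m, (rsum N over). pose proof (Hx m Hm) as Hxm.
  assert (Hover : forall n, (n < N)%nat -> 0 <= over n <= x n).
  { intros n Hn. pose proof (Hx n Hn). unfold over. destruct (Rle_dec (y n - x n) 0); lra. }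
  repeat split; [assumption|lra| apply rsum_nonneg; apply Hover |..].
  - assert (Hovm : over m = 0) by (unfold over; destruct (Rle_dec (y m - x m) 0); lra).
    pose proof (rsum_term_plus_le N m x over Hm ltac:(intros n Hn _; apply Hover, Hn)). lra.
  - rewrite Rmult_plus_distr_l, <- !rsum_scal, <- rsum_plus. apply rsum_le.
    intros n Hn. pose proof (Hx n Hn). pose proof (Hy n Hn). unfold over.
    destruct (Rle_dec (y n - x n) 0).
    + nra.
    + pose proof (Hmax n Hn ltac:(lra)). nra.
Qed.

Definition upd (y : nat -> R) (m : nat) (e : R) : nat -> R :=
  fun n => if Nat.eq_dec n m then y n + e else y n.

Lemma total_nonneg (N : nat) (y : nat -> R) : nonneg_vec N y -> 0 <= total N y.
Proof. apply rsum_nonneg. Qed.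

Lemma le_total (N m : nat) (y : nat -> R) : nonneg_vec N y -> (m < N)%nat -> y m <= total N y.
Proof.
  intros Hy Hm.
  pose proof (rsum_term_plus_le N m y (fun _ => 0) Hm) as H.
  rewrite rsum_zero in H. unfold total.
  assert (y m + 0 - 0 <= rsum N y) by (apply H; intros n Hn _; split; [lra| apply Hy, Hn]).
  lra.
Qed.

Lemma nonneg_upd (N m : nat) (y : nat -> R) (e : R) :
  nonneg_vec N y -> 0 <= y m + e -> nonneg_vec N (upd y m e).
Proof.
  intros Hy He n Hn. unfold upd. destruct (Nat.eq_dec n m) as [->|]; [assumption| apply Hy, Hn].
Qed.

Lemma welfare_upd (N m : nat) (p : R -> R) (C : nat -> R -> R) (y : nat -> R) (e : R) :
  continuous_nonneg p -> nonneg_vec N y -> (m < N)%nat -> 0 <= total N y + e ->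
  welfare N p C (upd y m e) =
  welfare N p C y + (RInt p (total N y) (total N y + e) - (C m (y m + e) - C m (y m))).
Proof.
  intros Hp Hy Hm He.
  assert (Hupd_m : upd y m e m = y m + e) by (unfold upd; destruct (Nat.eq_dec m m); [reflexivity|lia]).
  assert (Hupd_n : forall n, (n < N)%nat -> n <> m -> upd y m e n = y n)
    by (intros n _ Hn; unfold upd; destruct (Nat.eq_dec n m); [lia|reflexivity]).
  assert (Htot : total N (upd y m e) = total N y + e).
  { unfold total. rewrite (rsum_upd N m y (upd y m e) Hm Hupd_n), Hupd_m. ring. }
  unfold welfare. rewrite Htot.
  rewrite (rsum_upd N m (fun n => C n (y n)) (fun n => C n (upd y m e n)) Hm)
    by (intros n Hn Hnm; rewrite Hupd_n by assumption; reflexivity).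
  rewrite Hupd_m, <- (Rint_diff p (total N y) (total N y + e)) by (assumption || apply total_nonneg, Hy).
  ring.
Qed.

Lemma profitable_increase (p Cm : R -> R) (a g Y : R) :
  continuous_nonneg p -> nonincreasing_nonneg p -> 0 <= Y -> 0 <= a ->
  is_right_deriv Cm a g -> g < p Y ->
  exists e, 0 < e /\ 0 < RInt p Y (Y + e) - (Cm (a + e) - Cm a).
Proof.
  intros Hp Hm HY Ha Hd Hg. set (eps := (p Y - g) / 2).
  destruct (right_deriv_slope Cm a g Hd eps ltac:(unfold eps; lra)) as [d1 [Hd1 Hcost]].
  destruct (continuous_right_limit p Y Hp HY eps ltac:(unfold eps; lra)) as [d2 [Hd2 Hprice]].
  destruct (small_pos d1 d2 Hd1 Hd2) as [e [He Hed2]].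
  exists e. split; [lra|].
  specialize (Hcost e He). specialize (Hprice e ltac:(lra)).
  apply Rabs_def2 in Hcost. apply Rabs_def2 in Hprice.
  pose proof (RInt_nonincreasing p Y (Y + e) Hp Hm HY ltac:(lra)) as [HI _].
  assert (Hslope : slope Cm a (a + e) * e = Cm (a + e) - Cm a)
    by (replace e with (a + e - a) at 2 by ring; apply slope_mul; lra).
  replace (Y + e - Y) with e in HI by ring.
  unfold eps in *. nra.
Qed.

(* The efficiency bound as pure arithmetic: [Wx] and [WxS] stand for the welfare of
   the Cournot candidate and of the optimum, [c] and [dd] for the two slopes, [Sg]
   for the output gap, [M] for the largest under-producer and [b] for the total
   output of the over-producers. *)
Lemma efficiency_inequality (c dd Sg M b Wx WxS : R) :
  0 < dd -> dd <= c -> 0 < Sg -> 0 <= b -> dd * Sg <= c * M ->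
  c * ((M + b) ^ 2 / 2 + M ^ 2) <= Wx ->
  WxS - Wx <= - dd * Sg ^ 2 / 2 + c * M * (Sg + b) ->
  f_bound (c / dd) * WxS <= Wx.
Proof.
  intros Hdd Hcd HSg Hb HM HWx Hgap.
  assert (Hk : 1 <= c / dd) by (apply (Rmult_le_reg_r dd); [lra|]; field_simplify; lra).
  set (f := f_bound (c / dd)).
  destruct (f_bound_range (c / dd) Hk) as [Hf0 Hf1]. fold f in Hf0, Hf1.
  set (u := c * M / (dd * Sg)). set (v := c * b / (dd * Sg)).
  assert (Hu : 1 <= u) by (apply (Rmult_le_reg_r (dd * Sg)); [nra|]; unfold u; field_simplify; nra).
  assert (Hv : 0 <= v) by (apply Rdiv_le_0_compat; nra).
  pose proof (f_bound_key (c / dd) u v Hk Hu Hv) as Hkey. fold f in Hkey.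
  set (K := dd * dd * Sg * Sg / c).
  assert (HK : 0 < K) by (unfold K; apply Rdiv_lt_0_compat; [repeat apply Rmult_lt_0_compat|]; lra).
  assert (HU : - dd * Sg ^ 2 / 2 + c * M * (Sg + b) = K * (u * (c / dd + v) - c / dd / 2))
    by (unfold K, u, v; field; lra).
  assert (HW : c * ((M + b) ^ 2 / 2 + M ^ 2) = K * ((u + v) ^ 2 / 2 + u ^ 2))
    by (unfold K, u, v; field; lra).
  assert (f * (WxS - Wx) <= (1 - f) * Wx).
  { apply Rle_trans with (f * (K * (u * (c / dd + v) - c / dd / 2))).
    - rewrite <- HU. apply Rmult_le_compat_l; assumption.
    - apply Rle_trans with ((1 - f) * (K * ((u + v) ^ 2 / 2 + u ^ 2))); [nra|].
      rewrite <- HW. apply Rmult_le_compat_l; lra. }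
  lra.
Qed.

(* The Cournot candidate.  The hypotheses are the parts of Assumptions 1, 2 and 4
   that the argument uses, together with convexity of the inverse demand. *)
Section CournotCandidate.
Variables (N : nat) (p dpp dpm : R -> R) (C dC : nat -> R -> R) (x xS : nat -> R).
Hypothesis Hp_cont : continuous_nonneg p.
Hypothesis Hp_decr : nonincreasing_nonneg p.
Hypothesis Hp_conv : convex_nonneg p.
Hypothesis Hp_deriv : forall q, 0 < q -> is_left_deriv p q (dpm q) /\ is_right_deriv p q (dpp q).
Hypothesis HC_conv : forall n, (n < N)%nat -> convex_nonneg (C n).
Hypothesis HC_zero : forall n, (n < N)%nat -> C n 0 = 0.
Hypothesis HC_right : forall n a, (n < N)%nat -> 0 <= a -> is_right_deriv (C n) a (dC n a).
Hypothesis HC_left : forall n a, (n < N)%nat -> 0 < a -> is_left_deriv (C n) a (dC n a).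
Hypothesis Hentry : exists n, (n < N)%nat /\ p 0 > dC n 0.
Hypothesis Hx : cournot_candidate N p dpp dpm dC x.
Hypothesis HxS : social_optimum N p C xS.

Local Notation X := (total N x).
Local Notation XS := (total N xS).
Local Notation W := (welfare N p C).
Local Notation c := (Rabs (dpp (total N x))).

Lemma x_nonneg : nonneg_vec N x.
Proof. apply Hx. Qed.

Lemma xS_nonneg : nonneg_vec N xS.
Proof. apply HxS. Qed.

(* Some supplier is active: if all outputs were zero, the supplier of Assumption 4
   would violate the Cournot conditions. *)
Lemma total_output_pos : 0 < X.
Proof.
  destruct Hentry as [n0 [Hn0 Hp0]].
  destruct (Rle_lt_or_eq_dec 0 X (total_nonneg N x x_nonneg)) as [|HX0]; [assumption|exfalso].
  assert (Hxn0 : x n0 = 0).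
  { pose proof (le_total N n0 x x_nonneg Hn0). pose proof (x_nonneg n0 Hn0). lra. }
  destruct Hx as [_ Hfoc]. destruct (Hfoc n0 Hn0) as [_ Hge].
  rewrite <- HX0, Hxn0 in Hge. lra.
Qed.

(* The price is differentiable at [X]: convexity gives [dpm X <= dpp X], and the two
   Cournot conditions of an active supplier give the reverse inequality. *)
Lemma price_deriv_eq : dpm X = dpp X.
Proof.
  destruct (Hp_deriv X total_output_pos) as [Hl Hr].
  pose proof (left_deriv_le_right_deriv p Hp_conv X _ _ total_output_pos Hl Hr).
  destruct (rsum_pos_ex N x total_output_pos) as [m [Hm Hxm]].
  destruct Hx as [_ Hfoc]. destruct (Hfoc m Hm) as [Hle Hge]. specialize (Hle Hxm).
  nra.
Qed.

Lemma price_slope : dpp X = - c.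
Proof.
  destruct (Hp_deriv X total_output_pos) as [_ Hr].
  assert (dpp X <= 0).
  { apply (right_limit_le _ _ 0 1 (right_deriv_slope p X _ Hr)); [lra|].
    intros h Hh. apply slope_nonpos; [lra|]. pose proof total_output_pos. apply Hp_decr; lra. }
  rewrite Rabs_left1 by assumption. ring.
Qed.

Lemma foc_lower (n : nat) : (n < N)%nat -> p X - c * x n <= dC n (x n).
Proof.
  intros Hn. destruct Hx as [_ Hfoc]. destruct (Hfoc n Hn) as [_ Hge].
  rewrite price_slope in Hge. lra.
Qed.

Lemma foc_active (n : nat) : (n < N)%nat -> 0 < x n -> dC n (x n) = p X - c * x n.
Proof.
  intros Hn Hxn. destruct Hx as [_ Hfoc]. destruct (Hfoc n Hn) as [Hle Hge].
  specialize (Hle Hxn). rewrite price_deriv_eq, price_slope in Hle. rewrite price_slope in Hge. lra.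
Qed.

(* The optimum has positive welfare: starting from zero output, a small production
   by the supplier of Assumption 4 is profitable. *)
Lemma optimum_positive : 0 < W xS.
Proof.
  destruct Hentry as [n0 [Hn0 Hp0]].
  set (z := fun _ : nat => 0).
  assert (Hz : nonneg_vec N z) by (intros n Hn; unfold z; lra).
  assert (Htz : total N z = 0) by apply rsum_zero.
  assert (HWz : W z = 0).
  { unfold welfare. rewrite Htz, (Rint_RInt p 0 0 Hp_cont) by lra. rewrite RInt_point.
    rewrite (rsum_ext N _ (fun _ => 0)) by (intros n Hn; apply HC_zero, Hn).
    rewrite rsum_zero. unfold zero. simpl. ring. }
  destruct (profitable_increase p (C n0) 0 (dC n0 0) 0 Hp_cont Hp_decr ltac:(lra) ltac:(lra)
              (HC_right n0 0 Hn0 ltac:(lra)) Hp0) as [e [He Hgain]].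
  pose proof (welfare_upd N n0 p C z e Hp_cont Hz Hn0 ltac:(lra)) as HW.
  assert (Hz0 : z n0 = 0) by reflexivity.
  rewrite Htz, HWz, Hz0 in HW.
  assert (W (upd z n0 e) <= W xS) by (apply HxS, nonneg_upd; [assumption| unfold z; lra]).
  lra.
Qed.

Lemma cost_change_lower (n : nat) : (n < N)%nat ->
  (p X - c * x n) * (xS n - x n) <= C n (xS n) - C n (x n).
Proof.
  intros Hn. pose proof (x_nonneg n Hn). pose proof (xS_nonneg n Hn).
  pose proof (foc_lower n Hn).
  destruct (Rle_or_lt (x n) (xS n)) as [Hle|Hlt].
  - pose proof (tangent_below_right (C n) (HC_conv n Hn) (x n) _ (xS n) (HC_right n (x n) Hn ltac:(lra)) ltac:(lra) Hle).
    nra.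
  - pose proof (tangent_below_left (C n) (HC_conv n Hn) (x n) _ (xS n) (HC_left n (x n) Hn ltac:(lra)) ltac:(lra) ltac:(lra)).
    rewrite foc_active in * by (assumption || lra). nra.
Qed.

Lemma cost_upper (n : nat) : (n < N)%nat -> C n (x n) <= (p X - c * x n) * x n.
Proof.
  intros Hn. pose proof (HC_zero n Hn).
  destruct (Rle_lt_or_eq_dec 0 (x n) (x_nonneg n Hn)) as [Hlt|Heq].
  - pose proof (tangent_below_left (C n) (HC_conv n Hn) (x n) _ 0 (HC_left n (x n) Hn Hlt) ltac:(lra) ltac:(lra)).
    rewrite foc_active in * by assumption. lra.
  - rewrite <- Heq in *. lra.
Qed.

Lemma welfare_gap :
  W xS - W x <= RInt p X XS - p X * (XS - X) + c * rsum N (fun n => x n * (xS n - x n)).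
Proof.
  pose proof (rsum_le N _ _ cost_change_lower) as Hcost.
  rewrite rsum_minus in Hcost.
  rewrite (rsum_ext N (fun n => (p X - c * x n) * (xS n - x n))
             (fun n => p X * (xS n - x n) + (- c) * (x n * (xS n - x n)))) in Hcost by (intros; ring).
  rewrite rsum_plus, !rsum_scal, rsum_minus in Hcost.
  unfold welfare. rewrite <- (Rint_diff p X XS) by (assumption || apply total_nonneg; apply x_nonneg || apply xS_nonneg).
  unfold total in *. lra.
Qed.

Lemma welfare_lower : RInt p 0 X - p X * X + c * rsum N (fun n => x n * x n) <= W x.
Proof.
  pose proof (rsum_le N _ _ cost_upper) as Hcost.
  rewrite (rsum_ext N (fun n => (p X - c * x n) * x n) (fun n => p X * x n + (- c) * (x n * x n)))
    in Hcost by (intros; ring).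
  rewrite rsum_plus, !rsum_scal in Hcost.
  unfold welfare. rewrite Rint_RInt by (assumption || lra || apply total_nonneg, x_nonneg).
  unfold total in *. lra.
Qed.

(* Both come from welfare not increasing under unilateral deviations. *)
Lemma optimum_marginal_under (n : nat) : (n < N)%nat -> x n < xS n -> dC n (x n) <= p XS.
Proof.
  intros Hn Hlt. pose proof (x_nonneg n Hn). pose proof (le_total N n xS xS_nonneg Hn).
  apply (right_limit_ge _ _ _ (xS n - x n) (continuous_left_limit p XS Hp_cont ltac:(lra))); [lra|].
  intros e He.
  pose proof (welfare_upd N n p C xS (- e) Hp_cont xS_nonneg Hn ltac:(lra)) as HW.
  assert (W (upd xS n (- e)) <= W xS) by (apply HxS, nonneg_upd; [apply xS_nonneg| lra]).
  pose proof (RInt_nonincreasing p XS (XS + - e) Hp_cont Hp_decr ltac:(lra) ltac:(lra)) as [HI _].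
  pose proof (right_deriv_le_slope (C n) (HC_conv n Hn) (x n) _ (xS n + - e) (xS n)
                (HC_right n (x n) Hn ltac:(lra)) ltac:(lra) ltac:(lra) ltac:(lra)) as Hs.
  apply (Rmult_le_compat_r e) in Hs; [|lra].
  replace (slope (C n) (xS n + - e) (xS n) * e) with (C n (xS n) - C n (xS n + - e)) in Hs
    by (rewrite <- (slope_mul (C n) (xS n + - e) (xS n)) by lra; ring).
  replace (XS + - e) with (XS - e) in * by ring.
  apply (Rmult_le_reg_r e); lra.
Qed.

Lemma optimum_marginal_over (n : nat) : (n < N)%nat -> xS n < x n -> p XS <= dC n (x n).
Proof.
  intros Hn Hlt. pose proof (xS_nonneg n Hn).
  pose proof (total_nonneg N xS xS_nonneg).
  apply (right_limit_le _ _ _ (x n - xS n) (continuous_right_limit p XS Hp_cont ltac:(lra))); [lra|].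
  intros e He.
  pose proof (welfare_upd N n p C xS e Hp_cont xS_nonneg Hn ltac:(lra)) as HW.
  assert (W (upd xS n e) <= W xS) by (apply HxS, nonneg_upd; [apply xS_nonneg| lra]).
  pose proof (RInt_nonincreasing p XS (XS + e) Hp_cont Hp_decr ltac:(lra) ltac:(lra)) as [HI _].
  pose proof (slope_le_left_deriv (C n) (HC_conv n Hn) (x n) _ (xS n) (xS n + e)
                (HC_left n (x n) Hn ltac:(lra)) ltac:(lra) ltac:(lra) ltac:(lra)) as Hs.
  apply (Rmult_le_compat_r e) in Hs; [|lra].
  replace (slope (C n) (xS n) (xS n + e) * e) with (C n (xS n + e) - C n (xS n)) in Hs
    by (rewrite <- (slope_mul (C n) (xS n) (xS n + e)) by lra; ring).
  replace (XS + e - XS) with e in HI by ring.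
  apply (Rmult_le_reg_r e); lra.
Qed.

Lemma underproducer_price (n : nat) : (n < N)%nat -> x n < xS n -> p X - c * x n <= p XS.
Proof.
  intros Hn Hlt. pose proof (foc_lower n Hn). pose proof (optimum_marginal_under n Hn Hlt). lra.
Qed.

Lemma overproducer_price (n : nat) : (n < N)%nat -> xS n < x n -> p XS <= p X - c * x n.
Proof.
  intros Hn Hlt. pose proof (xS_nonneg n Hn).
  rewrite <- foc_active by (assumption || lra). apply optimum_marginal_over; assumption.
Qed.

Lemma equal_price_equal_total : 0 < c -> p X = p XS -> XS = X.
Proof.
  intros Hc Heq. pose proof total_output_pos as HX. pose proof (total_nonneg N xS xS_nonneg).
  destruct (Hp_deriv X HX) as [Hl Hr]. pose proof price_slope. pose proof price_deriv_eq.
  destruct (Rtotal_order X XS) as [Hlt|[Hsame|Hgt]]; [exfalso| symmetry; assumption| exfalso].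
  - assert (0 <= dpp X); [|lra].
    apply (right_limit_ge _ _ _ (XS - X) (right_deriv_slope p X _ Hr)); [lra|].
    intros h Hh. apply slope_nonneg; [lra|]. rewrite Heq. apply Hp_decr; lra.
  - assert (0 <= dpm X); [|lra].
    apply (right_limit_ge _ _ _ (X - XS) (left_deriv_slope p X _ Hl)); [lra|].
    intros h Hh. apply slope_nonneg; [lra|]. rewrite Heq. apply Hp_decr; lra.
Qed.

Lemma equal_price_welfare : p X = p XS -> W x = W xS.
Proof.
  intros Heq. pose proof total_output_pos as HX. pose proof (total_nonneg N xS xS_nonneg).
  assert (Hopt : W x <= W xS) by (apply HxS, x_nonneg).
  assert (Hint : RInt p X XS - p X * (XS - X) <= 0)
    by (pose proof (RInt_nonincreasing p X XS Hp_cont Hp_decr ltac:(lra) ltac:(lra)); lra).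
  assert (Hcross : c * rsum N (fun n => x n * (xS n - x n)) <= 0).
  { destruct (Rle_lt_or_eq_dec 0 c (Rabs_pos _)) as [Hc|Hc]; [|rewrite <- Hc; lra].
    pose proof (equal_price_equal_total Hc Heq) as Htot.
    assert (Hunder : forall n, (n < N)%nat -> x n <= xS n).
    { intros n Hn. destruct (Rle_or_lt (x n) (xS n)) as [|Hlt]; [assumption|exfalso].
      pose proof (overproducer_price n Hn Hlt). pose proof (xS_nonneg n Hn).
      assert (0 < c * x n) by (apply Rmult_lt_0_compat; lra). lra. }
    assert (Hbound : rsum N (fun n => x n * (xS n - x n)) <= rsum N (fun n => X * (xS n - x n))).
    { apply rsum_le. intros n Hn. apply Rmult_le_compat_r; [pose proof (Hunder n Hn); lra|].
      apply le_total; [apply x_nonneg| assumption]. }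
    rewrite rsum_scal, rsum_minus in Hbound. unfold total in Htot. rewrite Htot in Hbound.
    assert (rsum N (fun n => x n * (xS n - x n)) <= 0) by lra.
    nra. }
  pose proof welfare_gap. lra.
Qed.

(* Part (b).  Different prices force [X < XS] and [p XS < p X]: an over-producing
   optimum would need a price at least as high as the candidate's. *)
Lemma different_price_order : p X <> p XS -> X < XS /\ p XS < p X.
Proof.
  intros Hneq. pose proof total_output_pos as HX. pose proof (total_nonneg N xS xS_nonneg).
  assert (Hlt : X < XS).
  { destruct (Rtotal_order X XS) as [|[Hsame|Hgt]]; [assumption| exfalso| exfalso].
    - apply Hneq. rewrite Hsame. reflexivity.
    - assert (Hpos : 0 < rsum N (fun n => x n - xS n)) by (rewrite rsum_minus; unfold total in Hgt; lra).
      destruct (rsum_pos_ex N _ Hpos) as [n [Hn Hover]].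
      pose proof (overproducer_price n Hn ltac:(lra)). pose proof (x_nonneg n Hn).
      assert (0 <= c * x n) by (apply Rmult_le_pos; [apply Rabs_pos| assumption]).
      assert (p X <= p XS) by (apply Hp_decr; lra). lra. }
  split; [assumption|]. assert (p XS <= p X) by (apply Hp_decr; lra). lra.
Qed.

Lemma price_slope_bounds : p X <> p XS ->
  let d := Rabs ((p XS - p X) / (XS - X)) in 0 < d /\ d <= c /\ d * (XS - X) = p X - p XS.
Proof.
  intros Hneq d. destruct (different_price_order Hneq) as [Hlt HQP].
  pose proof total_output_pos as HX.
  assert (Hneg : slope p X XS < 0) by (apply Rdiv_neg_pos; lra).
  assert (Hd : d = - slope p X XS) by (apply Rabs_left, Hneg).
  destruct (Hp_deriv X HX) as [_ Hr].
  pose proof (right_deriv_le_slope p Hp_conv X _ X XS Hr ltac:(lra) ltac:(lra) Hlt) as Htangent.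
  pose proof (slope_mul p X XS ltac:(lra)).
  rewrite price_slope in Htangent. rewrite Hd. repeat split; nra.
Qed.

Lemma efficiency_lower : p X <> p XS ->
  f_bound (c / Rabs ((p XS - p X) / (XS - X))) * W xS <= W x.
Proof.
  intros Hneq. pose proof (price_slope_bounds Hneq) as Hslope. cbv zeta in Hslope.
  set (d := Rabs ((p XS - p X) / (XS - X))) in *. destruct Hslope as [Hd [Hdc HdS]].
  destruct (different_price_order Hneq) as [Hlt HQP].
  pose proof total_output_pos as HX. destruct (Hp_deriv X HX) as [Hl _].
  pose proof (RInt_convex_tangent p 0 X (dpm X) Hp_conv Hp_cont Hl ltac:(lra) ltac:(lra)) as Htangent.
  rewrite price_deriv_eq, price_slope in Htangent.
  pose proof (RInt_convex_chord p X XS Hp_conv Hp_cont ltac:(lra) Hlt) as Hchord.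
  destruct (largest_underproducer N x xS x_nonneg xS_nonneg
              ltac:(rewrite rsum_minus; unfold total in Hlt; lra))
    as [m [b [Hm [Hunder [Hb [HMb Hcross]]]]]].
  pose proof (underproducer_price m Hm Hunder) as HM.
  assert (Hsq : x m * x m <= rsum N (fun n => x n * x n)).
  { pose proof (rsum_term_plus_le N m (fun n => x n * x n) (fun _ => 0) Hm) as Hterm.
    rewrite rsum_zero in Hterm.
    enough (x m * x m + 0 - 0 <= rsum N (fun n => x n * x n)) by lra.
    apply Hterm. intros n Hn _. pose proof (x_nonneg n Hn). split; nra. }
  pose proof welfare_lower as Hlower. pose proof welfare_gap as Hgap.
  pose proof (x_nonneg m Hm). pose proof (Rabs_pos (dpp X)).
  rewrite rsum_minus in Hcross.
  apply (efficiency_inequality c d (XS - X) (x m) b); unfold total in *;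
    [assumption| assumption| lra| assumption| lra|..].
  - assert ((x m + b) ^ 2 <= rsum N x ^ 2) by (apply pow_incr; lra). nra.
  - nra.
Qed.

(* Strict inefficiency: an active supplier's marginal cost is below the price, so
   expanding its output would raise welfare. *)
Lemma candidate_not_optimal : 0 < c -> W x < W xS.
Proof.
  intros Hc. pose proof total_output_pos as HX.
  destruct (rsum_pos_ex N x HX) as [m [Hm Hxm]].
  assert (Hmc : dC m (x m) < p X).
  { rewrite foc_active by assumption. assert (0 < c * x m) by (apply Rmult_lt_0_compat; lra). lra. }
  destruct (profitable_increase p (C m) (x m) (dC m (x m)) X Hp_cont Hp_decr ltac:(lra) ltac:(lra)
              (HC_right m (x m) Hm ltac:(lra)) Hmc) as [e [He Hgain]].
  pose proof (welfare_upd N m p C x e Hp_cont x_nonneg Hm ltac:(lra)) as HW.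
  assert (W (upd x m e) <= W xS) by (apply HxS, nonneg_upd; [apply x_nonneg| lra]).
  lra.
Qed.

Lemma efficiency_bounds : p X <> p XS ->
  let d := Rabs ((p XS - p X) / (XS - X)) in
  c / d >= 1 /\ 1 > efficiency N p C x xS /\ efficiency N p C x xS >= f_bound (c / d).
Proof.
  intros Hneq d. pose proof (price_slope_bounds Hneq) as Hslope. cbv zeta in Hslope. fold d in Hslope.
  destruct Hslope as [Hd [Hdc _]].
  pose proof optimum_positive as HWS. pose proof (efficiency_lower Hneq) as Hbound. fold d in Hbound.
  pose proof (candidate_not_optimal ltac:(lra)) as Hstrict.
  unfold efficiency. repeat split; apply Rle_ge || apply Rlt_gt; unfold Rdiv.
  - apply (Rmult_le_reg_r d); [assumption|]. rewrite Rmult_assoc, Rinv_l; lra.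
  - apply (Rmult_lt_reg_r (W xS)); [assumption|]. rewrite Rmult_assoc, Rinv_l; lra.
  - apply (Rmult_le_reg_r (W xS)); [assumption|]. rewrite Rmult_assoc, Rinv_l; lra.
Qed.

End CournotCandidate.

Theorem theorem2 (N : nat) (p dpp dpm : R -> R) (C dC : nat -> R -> R)
  (x xS : nat -> R)
  (HA1 : forall n, (n < N)%nat -> assumption1_cost (C n) (dC n))
  (HA2 : assumption2 p dpp dpm)
  (HA3 : exists R0, 0 < R0 /\ forall n, (n < N)%nat -> p R0 <= dC n 0)
  (HA4 : exists n, (n < N)%nat /\ p 0 > dC n 0)
  (Hconv : convex_nonneg p)
  (Hx : cournot_candidate N p dpp dpm dC x)
  (HxS : social_optimum N p C xS) :
  let X := total N x in
  let XS := total N xS in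
  (p X = p XS -> efficiency N p C x xS = 1) /\
  (p X <> p XS ->
     let c := Rabs (dpp X) in
     let d := Rabs ((p XS - p X) / (XS - X)) in
     let cb := c / d in
     cb >= 1 /\ 1 > efficiency N p C x xS /\ efficiency N p C x xS >= f_bound cb).
Proof.
  intros X XS.
  destruct HA2 as [Hp_cont [_ [Hp_decr [_ [_ Hp_deriv]]]]].
  assert (HC_conv : forall n, (n < N)%nat -> convex_nonneg (C n)) by (intros n Hn; apply (HA1 n Hn)).
  assert (HC_zero : forall n, (n < N)%nat -> C n 0 = 0) by (intros n Hn; apply (HA1 n Hn)).
  assert (HC_right : forall n a, (n < N)%nat -> 0 <= a -> is_right_deriv (C n) a (dC n a)).
  { intros n a Hn Ha. destruct (HA1 n Hn) as [_ [_ [_ [Hdiff [_ [Hright0 _]]]]]].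
    destruct (Rle_lt_or_eq_dec 0 a Ha) as [Hpos| <-]; [apply derivable_right, Hdiff, Hpos| exact Hright0]. }
  assert (HC_left : forall n a, (n < N)%nat -> 0 < a -> is_left_deriv (C n) a (dC n a))
    by (intros n a Hn Ha; apply derivable_left, (HA1 n Hn), Ha).
  split.
  - intros Heq. unfold efficiency.
    assert (HWS : 0 < welfare N p C xS) by (eapply optimum_positive; eassumption).
    assert (Hsame : welfare N p C x = welfare N p C xS) by (eapply equal_price_welfare; eassumption).
    rewrite Hsame. field. lra.
  - intros Hneq. eapply efficiency_bounds; eassumption.
Qed.
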